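(* Let $a,b$ be positive integers with $a\ge b$ such that either $b\ge 2$, or $b=1$ and $a\ge 5$, and let $A=\begin{pmatrix}2&-a\\-b&2\end{pmatrix}$. Then every $\pi$-system $\Sigma\subseteq\Delta^+_{\mathrm{re}}$ of $\mathfrak g(A)$ satisfies $|\Sigma|\le 2$. If $|\Sigma|=2$, then $\Sigma=\{\beta_1^j,\beta_2^k\}$ for some $j,k\in\mathbb Z_+$; in particular $\Sigma$ is linearly independent. Conversely: (1) if $b\ge 2$, then $\{\beta_1^j,\beta_2^k\}$ is a $\pi$-system for all $j,k\in\mathbb Z_+$; (2) if $b=1$ and $a\ge 5$, then $\{\beta_1^j,\beta_2^k\}$ is a $\pi$-system if and only if $(j,k)\neq(1,0)$.
   Context: Let $\mathfrak g(A)$ be the Kac–Moody algebra of the generalized Cartan matrix $A=\begin{pmatrix}2&-a\\-b&2\end{pmatrix}$, with simple roots $\alpha_1,\alpha_2$, root system $\Delta$, set of real roots $\Delta_{\mathrm{re}}$ and positive real roots $\Delta^+_{\mathrm{re}}$. $\mathbb Z_+=\{0,1,2,\dots\}$. Define integers $c_j,d_j$ ($j\in\mathbb Z_+$) by $c_0=d_0=0$, $c_1=d_1=1$, $c_{k+2}+c_k=a\,d_{k+1}$, $d_{k+2}+d_k=b\,c_{k+1}$. For $j\in\mathbb Z_+$ set $\beta_1^j=c_j\alpha_1+d_{j+1}\alpha_2$ and $\beta_2^j=c_{j+1}\alpha_1+d_j\alpha_2$; then $\Delta^+_{\mathrm{re}}=\{\beta_1^j,\beta_2^j: j\in\mathbb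 Z_+\}$. A subset $\Sigma\subseteq\Delta_{\mathrm{re}}$ is called a $\pi$-system if $\alpha-\beta\notin\Delta$ for all $\alpha,\beta\in\Sigma$ (here $0\notin\Delta$). *)

(* roots of the rank-2 Kac-Moody algebra g(A), A = [[2,-a],[-b,2]],
   are represented by their coordinates (x,y) in the basis alpha_1, alpha_2 of the
   root lattice Q = Z alpha_1 + Z alpha_2. *)
From Stdlib Require Import ZArith List.
Open Scope Z_scope.

Definition root := (Z * Z)%type.

Definition simple_root (i : bool) : root := if i then (1, 0) else (0, 1).

(* <x a1 + y a2, a1^v> = 2x - a y ;  <x a1 + y a2, a2^v> = -b x + 2y  (a_ij = <a_i^v, a_j>) *)
Definition pair1 (a : Z) (r : root) : Z := 2 * fst r - a * snd r.
Definition pair2 (b : Z) (r : root) : Z := - b * fst r + 2 * snd r.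

Definition refl1 (a : Z) (r : root) : root := (fst r - pair1 a r, snd r).
Definition refl2 (b : Z) (r : root) : root := (fst r, snd r - pair2 b r).

(* action of the Weyl group element r_{i1} ... r_{in} (a word in the generators;
   true = r_1, false = r_2) *)
Definition weyl_act (a b : Z) (w : list bool) (r : root) : root :=
  fold_right (fun (i : bool) v => if i then refl1 a v else refl2 b v) r w.

Definition real_root (a b : Z) (r : root) : Prop :=
  exists (w : list bool) (i : bool), r = weyl_act a b w (simple_root i).

(* Kac's fundamental set K: nonzero elements of Q_+ with connected support
   on which all <., a_i^v> are <= 0. Support {1,2} is connected iff a_12 = -a <> 0. *)
Definition fund_set (a b : Z) (r : root) : Prop :=
  0 <= fst r /\ 0 <= snd r /\ r <> (0, 0) /\
  (0 < fst r -> 0 < snd r -> - a <> 0) /\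
  pair1 a r <= 0 /\ pair2 b r <= 0.

(* positive imaginary roots: Delta^im_+ = W . K  (Kac, Thm 5.4) *)
Definition pos_imag_root (a b : Z) (r : root) : Prop :=
  exists (w : list bool) (k : root), fund_set a b k /\ r = weyl_act a b w k.

Definition imag_root (a b : Z) (r : root) : Prop :=
  pos_imag_root a b r \/ pos_imag_root a b (- fst r, - snd r).

Definition is_root (a b : Z) (r : root) : Prop := real_root a b r \/ imag_root a b r.

Definition pos_real_root (a b : Z) (r : root) : Prop :=
  real_root a b r /\ 0 <= fst r /\ 0 <= snd r.

Definition rsub (r s : root) : root := (fst r - fst s, snd r - snd s).

Definition pi_system (a b : Z) (S : root -> Prop) : Prop :=
  (forall r, S r -> real_root a b r) /\
  (forall x y, S x -> S y -> ~ is_root a b (rsub x y)).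

(* the sequences c_j, d_j: cd k = ((c_k, d_k), (c_{k+1}, d_{k+1})) *)
Fixpoint cd (a b : Z) (k : nat) : (Z * Z) * (Z * Z) :=
  match k with
  | O => ((0, 0), (1, 1))
  | S k' => let '((c0, d0), (c1, d1)) := cd a b k' in
            ((c1, d1), (a * d1 - c0, b * c1 - d0))
  end.

Definition cseq (a b : Z) (k : nat) : Z := fst (fst (cd a b k)).
Definition dseq (a b : Z) (k : nat) : Z := snd (fst (cd a b k)).

Definition beta1 (a b : Z) (j : nat) : root := (cseq a b j, dseq a b (S j)).
Definition beta2 (a b : Z) (j : nat) : root := (cseq a b (S j), dseq a b j).

Definition pair_set (x y : root) : root -> Prop := fun r => r = x \/ r = y.

Definition lin_indep2 (x y : root) : Prop :=
  forall p q : Z, p * fst x + q * fst y = 0 -> p * snd x + q * snd y = 0 -> p = 0 /\ q = 0.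

From Stdlib Require Import ZArith List Lia.
Import ListNotations.
Open Scope Z_scope.

(* The form (x|y) with (a1|a1) = 2b, (a2|a2) = 2a, (a1|a2) = -ab is invariant under the
   Weyl group.  Real roots have norm 2a or 2b, imaginary roots have norm <= 0, and
   conversely every nonzero vector of the root lattice with norm <= 0 is an imaginary root
   (Kac's descent to the fundamental set).  The positive real roots are the beta_i^j, and
   the simple reflections permute the +-beta's, shifting the index by one.

   Two roots of the same family differ by a vector of norm <= 0 (apart from two real
   roots when b = 1), so a pi-system contains at most one root of each family.  For the
   mixed differences, Weyl invariance reduces (beta_1^j|beta_2^k) to a pairing with a
   simple root: it is -a (d_{n+2} - d_n) or -b (c_{n+2} - c_n) with n = j + k.  These gaps
   satisfy the recurrence of (c, d) and, as ab >= 4, grow along each parity class; hence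
   beta_1^j - beta_2^k has norm > 2a and is not a root, except for b = 1, (j, k) = (1, 0),
   where it is a2.  Finally (beta_1^j|beta_2^k) < 0 while both norms are positive, which
   forces linear independence. *)

Definition form (a b : Z) (r s : root) : Z :=
  2 * b * fst r * fst s - a * b * (fst r * snd s + snd r * fst s) + 2 * a * snd r * snd s.

Definition norm (a b : Z) (r : root) : Z := form a b r r.

Definition neg (r : root) : root := (- fst r, - snd r).

Section InvariantForm.
Variables a b : Z.

Lemma form_refl1 r s : form a b (refl1 a r) (refl1 a s) = form a b r s.
Proof. unfold form, refl1, pair1; cbn [fst snd]; ring. Qed.

Lemma form_refl2 r s : form a b (refl2 b r) (refl2 b s) = form a b r s.
Proof. unfold form, refl2, pair2; cbn [fst snd]; ring. Qed.

Lemma weyl_act_cons i w r :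
  weyl_act a b (i :: w) r = if i then refl1 a (weyl_act a b w r) else refl2 b (weyl_act a b w r).
Proof. reflexivity. Qed.

Lemma norm_weyl_act w r : norm a b (weyl_act a b w r) = norm a b r.
Proof.
  unfold norm; induction w as [|[] w IH]; rewrite ?weyl_act_cons, ?form_refl1, ?form_refl2; auto.
Qed.

Lemma norm_neg r : norm a b (neg r) = norm a b r.
Proof. unfold norm, form, neg; cbn [fst snd]; ring. Qed.

Lemma norm_rsub r s : norm a b (rsub r s) = norm a b r + norm a b s - 2 * form a b r s.
Proof. unfold norm, form, rsub; cbn [fst snd]; ring. Qed.

Lemma norm_rsub_comm r s : norm a b (rsub s r) = norm a b (rsub r s).
Proof. unfold norm, form, rsub; cbn [fst snd]; ring. Qed.

Lemma rsub_diag r : rsub r r = (0, 0).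
Proof. unfold rsub; f_equal; ring. Qed.

Lemma refl1_involutive r : refl1 a (refl1 a r) = r.
Proof. destruct r; unfold refl1, pair1; cbn [fst snd]; f_equal; ring. Qed.

Lemma refl2_involutive r : refl2 b (refl2 b r) = r.
Proof. destruct r; unfold refl2, pair2; cbn [fst snd]; f_equal; ring. Qed.

Lemma refl1_neg r : refl1 a (neg r) = neg (refl1 a r).
Proof. unfold refl1, pair1, neg; cbn [fst snd]; f_equal; ring. Qed.

Lemma refl2_neg r : refl2 b (neg r) = neg (refl2 b r).
Proof. unfold refl2, pair2, neg; cbn [fst snd]; f_equal; ring. Qed.

Lemma neg_involutive r : neg (neg r) = r.
Proof. destruct r; unfold neg; cbn [fst snd]; f_equal; ring. Qed.

Lemma refl1_rsub r s : refl1 a (rsub r s) = rsub (refl1 a r) (refl1 a s).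
Proof. unfold refl1, pair1, rsub; cbn [fst snd]; f_equal; ring. Qed.

Lemma refl2_rsub r s : refl2 b (rsub r s) = rsub (refl2 b r) (refl2 b s).
Proof. unfold refl2, pair2, rsub; cbn [fst snd]; f_equal; ring. Qed.

Lemma weyl_act_eq0 w r : weyl_act a b w r = (0, 0) -> r = (0, 0).
Proof.
  induction w as [|i w IH]; auto.
  rewrite weyl_act_cons; intros H; apply IH.
  destruct i; [rewrite <- (refl1_involutive (weyl_act a b w r)), H
              | rewrite <- (refl2_involutive (weyl_act a b w r)), H];
    unfold refl1, refl2, pair1, pair2; cbn [fst snd]; f_equal; ring.
Qed.

Lemma root_neq0 r : is_root a b r -> r <> (0, 0).
Proof.
  intros [[w [i ->]] | [[w [k [Hk ->]]] | [w [k [Hk E]]]]] H.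
  - apply weyl_act_eq0 in H; destruct i; discriminate.
  - apply weyl_act_eq0 in H; destruct Hk as (_ & _ & Hk & _); auto.
  - rewrite H in E; symmetry in E; apply weyl_act_eq0 in E.
    destruct Hk as (_ & _ & Hk & _); auto.
Qed.

Lemma real_root_refl1 r : real_root a b r -> real_root a b (refl1 a r).
Proof. intros [w [i ->]]; exists (true :: w), i; reflexivity. Qed.

Lemma real_root_refl2 r : real_root a b r -> real_root a b (refl2 b r).
Proof. intros [w [i ->]]; exists (false :: w), i; reflexivity. Qed.

Lemma is_root_refl1 r : is_root a b r -> is_root a b (refl1 a r).
Proof.
  intros [Hr | [[w [k [Hk ->]]] | [w [k [Hk E]]]]].
  - left; apply real_root_refl1; auto.
  - right; left; exists (true :: w), k; auto.
  - right; right; exists (true :: w), k; split; auto.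
    rewrite weyl_act_cons, <- E; symmetry; apply (refl1_neg r).
Qed.

Lemma is_root_refl2 r : is_root a b r -> is_root a b (refl2 b r).
Proof.
  intros [Hr | [[w [k [Hk ->]]] | [w [k [Hk E]]]]].
  - left; apply real_root_refl2; auto.
  - right; left; exists (false :: w), k; auto.
  - right; right; exists (false :: w), k; split; auto.
    rewrite weyl_act_cons, <- E; symmetry; apply (refl2_neg r).
Qed.

Lemma real_root_norm r : real_root a b r -> norm a b r = 2 * b \/ norm a b r = 2 * a.
Proof.
  intros [w [i ->]]; rewrite norm_weyl_act.
  destruct i; unfold norm, form, simple_root; cbn [fst snd]; [left | right]; ring.
Qed.

Lemma lin_indep2_of_form x y :
  0 <= fst x -> 0 <= snd x -> 0 <= fst y -> 0 <= snd y -> 0 < fst x + snd x ->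
  0 < norm a b x -> form a b x y < 0 -> lin_indep2 x y.
Proof.
  unfold lin_indep2, norm; intros Hx1 Hx2 Hy1 Hy2 Hx Nx Bxy p q E1 E2.
  (* (p x + q y | x) = 0 with (x|x) > 0 > (x|y) forces p and q to have the same sign,
     which the nonnegative coordinates of x and y forbid unless p = q = 0. *)
  assert (Ex : p * form a b x x + q * form a b x y = 0).
  { transitivity (2 * b * fst x * (p * fst x + q * fst y)
                  - a * b * (fst x * (p * snd x + q * snd y) + snd x * (p * fst x + q * fst y))
                  + 2 * a * snd x * (p * snd x + q * snd y)).
    - unfold form; ring.
    - rewrite E1, E2; ring. }
  nia.
Qed.

End InvariantForm.

Section RootNorms.
Variables a b : Z.
Hypotheses (ha : 1 <= a) (hb : 1 <= b).

Lemma fund_set_norm k : fund_set a b k -> norm a b k <= 0.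
Proof.
  intros (Hx & Hy & _ & _ & P1 & P2).
  assert (E : norm a b k = b * fst k * pair1 a k + a * snd k * pair2 b k)
    by (unfold norm, form, pair1, pair2; ring).
  rewrite E; nia.
Qed.

Lemma imag_root_norm r : imag_root a b r -> norm a b r <= 0.
Proof.
  intros [[w [k [Hk ->]]] | [w [k [Hk E]]]].
  - rewrite norm_weyl_act; apply fund_set_norm; auto.
  - rewrite <- (norm_neg a b r); unfold neg; rewrite E, norm_weyl_act.
    apply fund_set_norm; auto.
Qed.

Lemma is_root_norm_le r : b <= a -> is_root a b r -> norm a b r <= 2 * a.
Proof.
  intros hba [Hr | Hr].
  - destruct (real_root_norm a b r Hr); lia.
  - pose proof (imag_root_norm r Hr); lia.
Qed.

Lemma norm_nonpos_coord_mul r : norm a b r <= 0 -> 0 <= fst r * snd r.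
Proof.
  unfold norm, form; intros H.
  assert (0 <= b * (fst r * fst r)) by nia.
  assert (0 <= a * (snd r * snd r)) by nia.
  destruct (Z_le_gt_dec 0 (fst r * snd r)) as [|Hneg]; auto.
  assert (a * b * (fst r * snd r) < 0) by (apply Z.mul_pos_neg; nia).
  nia.
Qed.

Lemma norm_nonpos_coord_pos r : 0 <= fst r -> 0 <= snd r -> r <> (0, 0) ->
  norm a b r <= 0 -> 0 < fst r /\ 0 < snd r.
Proof.
  destruct r as [x y]; unfold norm, form; cbn [fst snd]; intros Hx Hy Hnz H.
  assert (x <> 0 \/ y <> 0) by (destruct (Z.eq_dec x 0), (Z.eq_dec y 0); subst; tauto).
  split; nia.
Qed.

Lemma pos_imag_root_refl1 r : pos_imag_root a b r -> pos_imag_root a b (refl1 a r).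
Proof. intros [w [k [Hk ->]]]; exists (true :: w), k; auto. Qed.

Lemma pos_imag_root_refl2 r : pos_imag_root a b r -> pos_imag_root a b (refl2 b r).
Proof. intros [w [k [Hk ->]]]; exists (false :: w), k; auto. Qed.

(* Kac's descent: reflecting in a simple root with positive pairing keeps the norm and
   lowers the height, until the fundamental set is reached. *)
Lemma pos_imag_root_of_norm r : 0 <= fst r -> 0 <= snd r -> r <> (0, 0) ->
  norm a b r <= 0 -> pos_imag_root a b r.
Proof.
  remember (Z.to_nat (fst r + snd r)) as n eqn:En; revert r En.
  induction n as [n IH] using lt_wf_ind; intros r -> Hx Hy Hnz Hn.
  destruct (norm_nonpos_coord_pos r Hx Hy Hnz Hn) as [Hx0 Hy0].
  destruct (Z_lt_le_dec 0 (pair1 a r)) as [P1 | P1];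
    [| destruct (Z_lt_le_dec 0 (pair2 b r)) as [P2 | P2]].
  - rewrite <- (refl1_involutive a r); apply pos_imag_root_refl1.
    assert (Hn' : norm a b (refl1 a r) <= 0) by (unfold norm; rewrite form_refl1; auto).
    pose proof (norm_nonpos_coord_mul _ Hn').
    apply (IH (Z.to_nat (fst (refl1 a r) + snd (refl1 a r)))); auto;
      unfold refl1, pair1 in *; cbn [fst snd] in *; try nia.
    intro H0; injection H0; lia.
  - rewrite <- (refl2_involutive b r); apply pos_imag_root_refl2.
    assert (Hn' : norm a b (refl2 b r) <= 0) by (unfold norm; rewrite form_refl2; auto).
    pose proof (norm_nonpos_coord_mul _ Hn').
    apply (IH (Z.to_nat (fst (refl2 b r) + snd (refl2 b r)))); auto;
      unfold refl2, pair2 in *; cbn [fst snd] in *; try nia.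
    intro H0; injection H0; lia.
  - exists [], r; split; [repeat split; auto; lia | reflexivity].
Qed.

Lemma imag_root_of_norm r : r <> (0, 0) -> norm a b r <= 0 -> imag_root a b r.
Proof.
  intros Hnz Hn; pose proof (norm_nonpos_coord_mul r Hn).
  assert (Hs : 0 <= fst r /\ 0 <= snd r \/ fst r <= 0 /\ snd r <= 0) by nia.
  destruct Hs as [[Hx Hy] | [Hx Hy]].
  - left; apply pos_imag_root_of_norm; auto.
  - right; apply (pos_imag_root_of_norm (neg r)); cbn [neg fst snd]; try lia.
    + destruct r as [x y]; intro H0; injection H0; intros; apply Hnz; f_equal; lia.
    + rewrite norm_neg; auto.
Qed.

End RootNorms.

Lemma nat_ind2 (P : nat -> Prop) :
  P 0%nat -> P 1%nat -> (forall n, P n -> P (S (S n))) -> forall n, P n.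
Proof.
  intros H0 H1 HS n; enough (P n /\ P (S n)) by tauto.
  induction n as [|n IH]; [auto | split; [|apply HS]; tauto].
Qed.

Section CoupledRecurrence.
Variables (a b : Z) (x y : nat -> Z).
Hypotheses (ha : 1 <= a) (hb : 1 <= b) (hab : 4 <= a * b).
Hypothesis x_SS : forall n, x (S (S n)) = a * y (S n) - x n.
Hypothesis y_SS : forall n, y (S (S n)) = b * x (S n) - y n.
Hypotheses (x0 : 0 <= x 0%nat) (y0 : 0 <= y 0%nat).
Hypotheses (xy0 : 2 * x 0%nat <= a * y 1%nat) (yx0 : 2 * y 0%nat <= b * x 1%nat).

Lemma coupled_invariant n :
  0 <= x n /\ 0 <= y n /\ 2 * x n <= a * y (S n) /\ 2 * y n <= b * x (S n).
Proof.
  induction n as [|n (Hx & Hy & Hxy & Hyx)]; [auto |].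
  (* the step needs a y_n <= (a b / 2) x_{n+1} <= (a b - 2) x_{n+1}, i.e. a b >= 4 *)
  assert (0 <= x (S n) /\ 0 <= y (S n)) as [Hx' Hy'] by nia.
  rewrite x_SS, y_SS.
  assert (a * (2 * y n) <= a * (b * x (S n))) by nia.
  assert (b * (2 * x n) <= b * (a * y (S n))) by nia.
  assert (4 * x (S n) <= a * b * x (S n)) by nia.
  assert (4 * y (S n) <= a * b * y (S n)) by nia.
  nia.
Qed.

Lemma coupled_le_SS n : x n <= x (S (S n)).
Proof. destruct (coupled_invariant n) as (_ & _ & H & _); rewrite x_SS; lia. Qed.

End CoupledRecurrence.

Section Sequences.
Variables a b : Z.

Lemma cd_S n : cd a b (S n) =
  (snd (cd a b n), (a * snd (snd (cd a b n)) - fst (fst (cd a b n)),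
                    b * fst (snd (cd a b n)) - snd (fst (cd a b n)))).
Proof. simpl; destruct (cd a b n) as [[c0 d0] [c1 d1]]; reflexivity. Qed.

Lemma cseq_SS n : cseq a b (S (S n)) = a * dseq a b (S n) - cseq a b n.
Proof. unfold cseq, dseq; rewrite (cd_S (S n)), (cd_S n); reflexivity. Qed.

Lemma dseq_SS n : dseq a b (S (S n)) = b * cseq a b (S n) - dseq a b n.
Proof. unfold cseq, dseq; rewrite (cd_S (S n)), (cd_S n); reflexivity. Qed.

Definition cgap n := cseq a b (S (S n)) - cseq a b n.
Definition dgap n := dseq a b (S (S n)) - dseq a b n.

Lemma cgap_SS n : cgap (S (S n)) = a * dgap (S n) - cgap n.
Proof. unfold cgap, dgap; rewrite (cseq_SS (S (S n))), (cseq_SS n); ring. Qed.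

Lemma dgap_SS n : dgap (S (S n)) = b * cgap (S n) - dgap n.
Proof. unfold cgap, dgap; rewrite (dseq_SS (S (S n))), (dseq_SS n); ring. Qed.

Lemma cgap_0 : cgap 0 = a.
Proof. unfold cgap; cbn; ring. Qed.
Lemma cgap_1 : cgap 1 = a * b - 2.
Proof. unfold cgap; cbn; ring. Qed.
Lemma cgap_2 : cgap 2 = a * (a * b - 3).
Proof. unfold cgap; cbn; ring. Qed.
Lemma cgap_3 : cgap 3 = a * b * (a * b - 4) + 2.
Proof. unfold cgap; cbn; ring. Qed.
Lemma dgap_0 : dgap 0 = b.
Proof. unfold dgap; cbn; ring. Qed.
Lemma dgap_1 : dgap 1 = a * b - 2.
Proof. unfold dgap; cbn; ring. Qed.
Lemma dgap_2 : dgap 2 = b * (a * b - 3).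
Proof. unfold dgap; cbn; ring. Qed.

End Sequences.

Definition beta (a b : Z) (i : bool) (j : nat) : root :=
  if i then beta1 a b j else beta2 a b j.

Definition signed_beta (a b : Z) (r : root) : Prop :=
  exists i j, r = beta a b i j \/ r = neg (beta a b i j).

Section Betas.
Variables a b : Z.

Lemma beta1_0 : beta1 a b 0 = (0, 1).
Proof. reflexivity. Qed.

Lemma beta2_0 : beta2 a b 0 = (1, 0).
Proof. reflexivity. Qed.

Lemma refl1_beta1 j : refl1 a (beta1 a b j) = beta2 a b (S j).
Proof. unfold beta1, beta2, refl1, pair1; cbn [fst snd]; rewrite cseq_SS; f_equal; ring. Qed.

Lemma refl1_beta2_S j : refl1 a (beta2 a b (S j)) = beta1 a b j.
Proof. unfold beta1, beta2, refl1, pair1; cbn [fst snd]; rewrite cseq_SS; f_equal; ring. Qed.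

Lemma refl1_beta2_0 : refl1 a (beta2 a b 0) = neg (beta2 a b 0).
Proof. rewrite beta2_0; unfold refl1, pair1, neg; cbn [fst snd]; f_equal; ring. Qed.

Lemma refl2_beta2 j : refl2 b (beta2 a b j) = beta1 a b (S j).
Proof. unfold beta1, beta2, refl2, pair2; cbn [fst snd]; rewrite dseq_SS; f_equal; ring. Qed.

Lemma refl2_beta1_S j : refl2 b (beta1 a b (S j)) = beta2 a b j.
Proof. unfold beta1, beta2, refl2, pair2; cbn [fst snd]; rewrite dseq_SS; f_equal; ring. Qed.

Lemma refl2_beta1_0 : refl2 b (beta1 a b 0) = neg (beta1 a b 0).
Proof. rewrite beta1_0; unfold refl2, pair2, neg; cbn [fst snd]; f_equal; ring. Qed.

Lemma real_root_beta i j : real_root a b (beta a b i j).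
Proof.
  revert i; induction j as [|j IH]; intros [].
  - exists [], false; reflexivity.
  - exists [], true; reflexivity.
  - cbn [beta]; rewrite <- refl2_beta2; apply real_root_refl2, (IH false).
  - cbn [beta]; rewrite <- refl1_beta1; apply real_root_refl1, (IH true).
Qed.

Lemma signed_beta_neg r : signed_beta a b r -> signed_beta a b (neg r).
Proof.
  intros [i [j [-> | ->]]]; exists i, j; [right | left]; auto using neg_involutive.
Qed.

Lemma signed_beta_refl1 r : signed_beta a b r -> signed_beta a b (refl1 a r).
Proof.
  assert (Hbeta : forall i j, signed_beta a b (refl1 a (beta a b i j))).
  { intros [] [|j]; cbn [beta].
    - exists false, 1%nat; left; apply refl1_beta1.
    - exists false, (S (S j)); left; apply refl1_beta1.
    - exists false, 0%nat; right; apply refl1_beta2_0.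
    - exists true, j; left; apply refl1_beta2_S. }
  intros [i [j [-> | ->]]]; [| rewrite refl1_neg; apply signed_beta_neg]; apply Hbeta.
Qed.

Lemma signed_beta_refl2 r : signed_beta a b r -> signed_beta a b (refl2 b r).
Proof.
  assert (Hbeta : forall i j, signed_beta a b (refl2 b (beta a b i j))).
  { intros [] [|j]; cbn [beta].
    - exists true, 0%nat; right; apply refl2_beta1_0.
    - exists false, j; left; apply refl2_beta1_S.
    - exists true, 1%nat; left; apply refl2_beta2.
    - exists true, (S (S j)); left; apply refl2_beta2. }
  intros [i [j [-> | ->]]]; [| rewrite refl2_neg; apply signed_beta_neg]; apply Hbeta.
Qed.

Lemma real_root_signed_beta r : real_root a b r -> signed_beta a b r.
Proof.
  intros [w [i ->]]; induction w as [|[] w IH]; rewrite ?weyl_act_cons.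
  - exists (negb i), 0%nat; left; destruct i; reflexivity.
  - apply signed_beta_refl1; auto.
  - apply signed_beta_refl2; auto.
Qed.

Lemma norm_beta i j :
  norm a b (beta a b i j) = if Bool.eqb i (Nat.even j) then 2 * a else 2 * b.
Proof.
  revert i; induction j as [|j IH]; intros [].
  - cbn [beta Bool.eqb Nat.even]; rewrite beta1_0; unfold norm, form; cbn [fst snd]; ring.
  - cbn [beta Bool.eqb Nat.even]; rewrite beta2_0; unfold norm, form; cbn [fst snd]; ring.
  - cbn [beta]; rewrite <- refl2_beta2; unfold norm; rewrite form_refl2.
    change (form a b (beta2 a b j) (beta2 a b j)) with (norm a b (beta a b false j)).
    rewrite IH, Nat.even_succ, <- Nat.negb_even; destruct (Nat.even j); reflexivity.
  - cbn [beta]; rewrite <- refl1_beta1; unfold norm; rewrite form_refl1.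
    change (form a b (beta1 a b j) (beta1 a b j)) with (norm a b (beta a b true j)).
    rewrite IH, Nat.even_succ, <- Nat.negb_even; destruct (Nat.even j); reflexivity.
Qed.

Lemma norm_beta_SS i j : norm a b (beta a b i (S (S j))) = norm a b (beta a b i j).
Proof. rewrite !norm_beta; reflexivity. Qed.

Lemma form_beta1_0_beta2 k : form a b (beta1 a b 0) (beta2 a b k) = - a * dgap a b k.
Proof. rewrite beta1_0; unfold form, beta2, dgap; cbn [fst snd]; rewrite dseq_SS; ring. Qed.

Lemma form_beta2_0_beta1 k : form a b (beta2 a b 0) (beta1 a b k) = - b * cgap a b k.
Proof. rewrite beta2_0; unfold form, beta1, cgap; cbn [fst snd]; rewrite cseq_SS; ring. Qed.

Lemma form_beta1_0_beta1 n : form a b (beta1 a b 0) (beta1 a b (S n)) = a * dgap a b n.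
Proof. rewrite beta1_0; unfold form, beta1, dgap; cbn [fst snd]; rewrite dseq_SS; ring. Qed.

Lemma form_beta2_0_beta2 n : form a b (beta2 a b 0) (beta2 a b (S n)) = b * cgap a b n.
Proof. rewrite beta2_0; unfold form, beta2, cgap; cbn [fst snd]; rewrite cseq_SS; ring. Qed.

Lemma form_beta1_beta2 j k : form a b (beta1 a b j) (beta2 a b k) =
  if Nat.even j then - a * dgap a b (j + k) else - b * cgap a b (j + k).
Proof.
  revert k; induction j as [j IH] using lt_wf_ind; intros k.
  destruct j as [|[|j]].
  - apply form_beta1_0_beta2.
  - rewrite <- form_refl2, refl2_beta1_S, refl2_beta2; apply form_beta2_0_beta1.
  - (* r1 r2 shifts beta1 down by two and beta2 up by two *)
    rewrite <- form_refl2, <- form_refl1, refl2_beta1_S, refl1_beta2_S, refl2_beta2, refl1_beta1.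
    rewrite IH by lia; cbn [Nat.even].
    replace (j + S (S k))%nat with (S (S j) + k)%nat by lia; reflexivity.
Qed.

End Betas.

Section Hyperbolic.
Variables a b : Z.
Hypotheses (ha : 1 <= a) (hb : 1 <= b) (hab : 4 <= a * b).

Lemma cgap_le_SS n : cgap a b n <= cgap a b (S (S n)).
Proof.
  apply (coupled_le_SS a b (cgap a b) (dgap a b)); auto using cgap_SS, dgap_SS;
    rewrite ?cgap_0, ?cgap_1, ?dgap_0, ?dgap_1; nia.
Qed.

Lemma dgap_le_SS n : dgap a b n <= dgap a b (S (S n)).
Proof.
  apply (coupled_le_SS b a (dgap a b) (cgap a b)); auto using cgap_SS, dgap_SS;
    rewrite ?cgap_0, ?cgap_1, ?dgap_0, ?dgap_1; nia.
Qed.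

Lemma cgap_pos n : 0 < cgap a b n.
Proof.
  induction n using nat_ind2; [rewrite cgap_0 | rewrite cgap_1 | pose proof (cgap_le_SS n)]; lia.
Qed.

Lemma dgap_pos n : 0 < dgap a b n.
Proof.
  induction n using nat_ind2; [rewrite dgap_0 | rewrite dgap_1 | pose proof (dgap_le_SS n)]; lia.
Qed.

Lemma cseq_pos n : 0 < cseq a b (S n).
Proof.
  induction n using nat_ind2.
  - cbn; lia.
  - cbn; lia.
  - pose proof (cgap_pos (S n)); unfold cgap in *; lia.
Qed.

Lemma dseq_pos n : 0 < dseq a b (S n).
Proof.
  induction n using nat_ind2.
  - cbn; lia.
  - cbn; lia.
  - pose proof (dgap_pos (S n)); unfold dgap in *; lia.
Qed.

Lemma pos_real_root_beta r : pos_real_root a b r -> exists i j, r = beta a b i j.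
Proof.
  intros [Hr [H1 H2]]; destruct (real_root_signed_beta a b r Hr) as [i [j [E | E]]]; eauto.
  exfalso; subst r; destruct i; unfold neg, beta, beta1, beta2 in *; cbn [fst snd] in *.
  - pose proof (dseq_pos j); lia.
  - pose proof (cseq_pos j); lia.
Qed.

Lemma lin_indep2_beta1_beta2 j k : lin_indep2 (beta1 a b j) (beta2 a b k).
Proof.
  assert (Hc : 0 <= cseq a b j) by (destruct j; [cbn; lia | pose proof (cseq_pos j); lia]).
  assert (Hd : 0 <= dseq a b k) by (destruct k; [cbn; lia | pose proof (dseq_pos k); lia]).
  pose proof (dseq_pos j); pose proof (cseq_pos k).
  apply (lin_indep2_of_form a b); try (unfold beta1, beta2; cbn [fst snd]; lia).
  - pose proof (norm_beta a b true j) as N; cbn [beta] in N; rewrite N.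
    destruct (Bool.eqb _ _); lia.
  - rewrite form_beta1_beta2; pose proof (cgap_pos (j + k)); pose proof (dgap_pos (j + k)).
    destruct (Nat.even j); nia.
Qed.

End Hyperbolic.

Section PiSystems.
Variables a b : Z.
Hypotheses (hb : 1 <= b) (hba : b <= a) (hcase : b = 1 -> 5 <= a).

Let ha : 1 <= a.
Proof. lia. Qed.
Let hab : 4 <= a * b.
Proof. destruct (Z.eq_dec b 1) as [-> | ?]; nia. Qed.

Lemma norm_beta_ge i j : 2 * b <= norm a b (beta a b i j).
Proof. rewrite norm_beta; destruct (Bool.eqb _ _); lia. Qed.

Lemma dgap_bound n : ~ (b = 1 /\ n = 0%nat) ->
  2 * a + norm a b (beta a b true (S n)) <= 2 * a * dgap a b n.
Proof.
  destruct n as [|n]; intros Hn.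
  - rewrite norm_beta, dgap_0; cbn [Bool.eqb Nat.even]; nia.
  - clear Hn; induction n as [| |n IH] using nat_ind2.
    + rewrite norm_beta, dgap_1; cbn [Bool.eqb Nat.even]; nia.
    + rewrite norm_beta, dgap_2; cbn [Bool.eqb Nat.even].
      destruct (Z.eq_dec b 1) as [Hb1 | ?]; [pose proof (hcase Hb1); subst b |]; nia.
    + rewrite norm_beta_SS.
      pose proof (dgap_le_SS a b ha hb hab (S n)); nia.
Qed.

Lemma cgap_bound n : ~ (b = 1 /\ n = 0%nat) ->
  2 * b + norm a b (beta a b false (S n)) <= 2 * b * cgap a b n.
Proof.
  destruct n as [|n]; intros Hn.
  - rewrite norm_beta, cgap_0; cbn [Bool.eqb Nat.even]; nia.
  - clear Hn; induction n as [| |n IH] using nat_ind2.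
    + rewrite norm_beta, cgap_1; cbn [Bool.eqb Nat.even]; nia.
    + rewrite norm_beta, cgap_2; cbn [Bool.eqb Nat.even].
      destruct (Z.eq_dec b 1) as [Hb1 | ?]; [pose proof (hcase Hb1); subst b |]; nia.
    + rewrite norm_beta_SS.
      pose proof (cgap_le_SS a b ha hb hab (S n)); nia.
Qed.

Lemma is_root_rsub_beta1_0 n : is_root a b (rsub (beta1 a b 0) (beta1 a b (S n))).
Proof.
  assert (Hdec : b = 1 /\ n = 0%nat \/ ~ (b = 1 /\ n = 0%nat)) by lia.
  destruct Hdec as [[Hb1 ->] | Hn].
  - (* the difference is -a1 *)
    left; exists [true], true; rewrite Hb1.
    unfold rsub, beta1, weyl_act, refl1, pair1, simple_root, cseq, dseq.
    cbn [fold_right fst snd cd]; f_equal; ring.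
  - right; apply imag_root_of_norm; auto.
    + unfold rsub, beta1; pose proof (cseq_pos a b ha hb hab n).
      intro H0; injection H0; lia.
    + rewrite norm_rsub, form_beta1_0_beta1.
      pose proof (dgap_bound n Hn); pose proof (norm_beta a b true 0) as N0.
      cbn [beta Bool.eqb Nat.even] in *; lia.
Qed.

Lemma is_root_rsub_beta2_0 n : is_root a b (rsub (beta2 a b 0) (beta2 a b (S n))).
Proof.
  assert (Hdec : b = 1 /\ n = 0%nat \/ ~ (b = 1 /\ n = 0%nat)) by lia.
  destruct Hdec as [[Hb1 ->] | Hn].
  - (* the difference is (1 - a, -1) = r1 r2 r1 a1 *)
    left; exists [true; false; true], true; rewrite Hb1.
    unfold rsub, beta2, weyl_act, refl1, refl2, pair1, pair2, simple_root, cseq, dseq.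
    cbn [fold_right fst snd cd]; f_equal; ring.
  - right; apply imag_root_of_norm; auto.
    + unfold rsub, beta2; pose proof (dseq_pos a b ha hb hab n).
      intro H0; injection H0; lia.
    + rewrite norm_rsub, form_beta2_0_beta2.
      pose proof (cgap_bound n Hn); pose proof (norm_beta a b false 0) as N0.
      cbn [beta Bool.eqb Nat.even] in *; lia.
Qed.

Lemma is_root_rsub_beta i j n : is_root a b (rsub (beta a b i j) (beta a b i (j + S n))).
Proof.
  revert i; induction j as [|j IH]; intros []; cbn [beta Nat.add].
  - apply is_root_rsub_beta1_0.
  - apply is_root_rsub_beta2_0.
  - rewrite <- !refl2_beta2, <- refl2_rsub; apply is_root_refl2, (IH false).
  - rewrite <- !refl1_beta1, <- refl1_rsub; apply is_root_refl1, (IH true).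
Qed.

Lemma cgap_gt n : ~ (b = 1 /\ n = 1%nat) -> a < b * (2 + cgap a b n).
Proof.
  destruct n as [|[|n]]; intros Hn.
  - rewrite cgap_0; nia.
  - rewrite cgap_1; nia.
  - clear Hn; induction n as [| |n IH] using nat_ind2.
    + rewrite cgap_2; nia.
    + rewrite cgap_3.
      destruct (Z.eq_dec b 1) as [Hb1 | ?]; [pose proof (hcase Hb1); subst b; nia |].
      assert (0 <= a * b * (a * b - 4)) by nia; nia.
    + pose proof (cgap_le_SS a b ha hb hab (S (S n))); nia.
Qed.

Lemma norm_rsub_beta1_beta2_gt j k : ~ (b = 1 /\ j = 1%nat /\ k = 0%nat) ->
  2 * a < norm a b (rsub (beta1 a b j) (beta2 a b k)).
Proof.
  intros Hjk; rewrite norm_rsub, form_beta1_beta2.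
  pose proof (norm_beta_ge true j); pose proof (norm_beta_ge false k); cbn [beta] in *.
  destruct (Nat.even j) eqn:Ej.
  - pose proof (dgap_pos a b ha hb hab (j + k)); nia.
  - assert (~ (b = 1 /\ (j + k)%nat = 1%nat)).
    { intros [Hb1 Hs]; apply Hjk; destruct j as [|[|j]]; [discriminate | lia | lia]. }
    pose proof (cgap_gt (j + k)); nia.
Qed.

Lemma pi_system_pair_beta j k : ~ (b = 1 /\ j = 1%nat /\ k = 0%nat) ->
  pi_system a b (pair_set (beta1 a b j) (beta2 a b k)).
Proof.
  intros Hjk; split.
  - intros r [-> | ->]; [apply (real_root_beta a b true) | apply (real_root_beta a b false)].
  - pose proof (norm_rsub_beta1_beta2_gt j k Hjk).
    pose proof (norm_rsub_comm a b (beta1 a b j) (beta2 a b k)).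
    intros x y [-> | ->] [-> | ->] Hr;
      try (apply (root_neq0 a b _ Hr), rsub_diag);
      apply is_root_norm_le in Hr; auto; lia.
Qed.

Lemma pi_system_beta_inj Sigma i j j' :
  pi_system a b Sigma -> Sigma (beta a b i j) -> Sigma (beta a b i j') -> j = j'.
Proof.
  intros [_ HP] Hj Hj'.
  destruct (Nat.lt_total j j') as [Hlt | [Heq | Hlt]]; auto; exfalso.
  - replace j' with (j + S (j' - S j))%nat in Hj' by lia.
    apply (HP _ _ Hj Hj'), is_root_rsub_beta.
  - replace j with (j' + S (j - S j'))%nat in Hj by lia.
    apply (HP _ _ Hj' Hj), is_root_rsub_beta.
Qed.

Lemma pi_system_pos_three Sigma :
  (forall r, Sigma r -> pos_real_root a b r) -> pi_system a b Sigma ->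
  forall x y z, Sigma x -> Sigma y -> Sigma z -> x = y \/ x = z \/ y = z.
Proof.
  intros HS HP x y z Hx Hy Hz.
  destruct (pos_real_root_beta a b ha hb hab x (HS x Hx)) as [ix [jx ->]].
  destruct (pos_real_root_beta a b ha hb hab y (HS y Hy)) as [iy [jy ->]].
  destruct (pos_real_root_beta a b ha hb hab z (HS z Hz)) as [iz [jz ->]].
  assert (inj : forall i j j', Sigma (beta a b i j) -> Sigma (beta a b i j') ->
                 beta a b i j = beta a b i j')
    by (intros i j j' H H'; rewrite (pi_system_beta_inj Sigma i j j' HP H H'); reflexivity).
  (* two of the three roots lie in the same family *)
  destruct ix, iy, iz; auto.
Qed.

Lemma pi_system_pos_pair Sigma :
  (forall r, Sigma r -> pos_real_root a b r) -> pi_system a b Sigma ->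
  forall x y, Sigma x -> Sigma y -> x <> y ->
  exists j k, forall r, Sigma r <-> r = beta1 a b j \/ r = beta2 a b k.
Proof.
  intros HS HP x y Hx Hy Hxy.
  assert (Hpair : forall u v, Sigma u -> Sigma v -> u <> v -> forall r, Sigma r <-> r = u \/ r = v).
  { intros u v Hu Hv Huv r; split; [| intros [-> | ->]; auto].
    intros Hr; destruct (pi_system_pos_three Sigma HS HP u v r Hu Hv Hr) as [E | [E | E]];
      [contradiction | left | right]; auto. }
  destruct (pos_real_root_beta a b ha hb hab x (HS x Hx)) as [[] [jx ->]];
  destruct (pos_real_root_beta a b ha hb hab y (HS y Hy)) as [[] [jy ->]];
  cbn [beta] in *.
  - destruct Hxy; f_equal; apply (pi_system_beta_inj Sigma true); auto.
  - exists jx, jy; apply Hpair; auto.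
  - exists jy, jx; intros r; rewrite (Hpair _ _ Hx Hy Hxy r); tauto.
  - destruct Hxy; f_equal; apply (pi_system_beta_inj Sigma false); auto.
Qed.

End PiSystems.

Lemma not_pi_system_beta1_1_beta2_0 a :
  ~ pi_system a 1 (pair_set (beta1 a 1 1) (beta2 a 1 0)).
Proof.
  intros [_ HP]; apply (HP (beta1 a 1 1) (beta2 a 1 0)); [left | right |]; auto.
  left; exists [], false; reflexivity.
Qed.

Theorem theorem3p1 (a b : Z) (hb : 1 <= b) (hab : b <= a)
    (hcase : 2 <= b \/ (b = 1 /\ 5 <= a)) :
  (forall S : root -> Prop,
      (forall r, S r -> pos_real_root a b r) -> pi_system a b S ->
      (forall x y z, S x -> S y -> S z -> x = y \/ x = z \/ y = z) /\
      (forall x y, S x -> S y -> x <> y ->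
         exists j k : nat,
           (forall r, S r <-> r = beta1 a b j \/ r = beta2 a b k) /\
           lin_indep2 (beta1 a b j) (beta2 a b k))) /\
  (2 <= b -> forall j k : nat, pi_system a b (pair_set (beta1 a b j) (beta2 a b k))) /\
  (b = 1 -> forall j k : nat,
      pi_system a b (pair_set (beta1 a b j) (beta2 a b k)) <-> (j, k) <> (1%nat, 0%nat)).
Proof.
  assert (hb1 : b = 1 -> 5 <= a) by lia.
  split; [| split].
  - intros S HS HP; split.
    + exact (pi_system_pos_three a b hb hab hb1 S HS HP).
    + intros x y Hx Hy Hxy.
      destruct (pi_system_pos_pair a b hb hab hb1 S HS HP x y Hx Hy Hxy) as [j [k HSjk]].
      exists j, k; split; auto.
      apply lin_indep2_beta1_beta2; destruct hcase as [| [-> ?]]; nia.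
  - intros Hb2 j k; apply pi_system_pair_beta; lia.
  - intros Hb1 j k; split.
    + intros HP E; injection E as -> ->; subst b; exact (not_pi_system_beta1_1_beta2_0 a HP).
    + intros Hjk; apply pi_system_pair_beta; auto.
      intros (_ & -> & ->); auto.
Qed.
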